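(* Let $\mathbb{K}=\mathbb{R}$ or $\mathbb{C}$ and let $\phi:A_1^\ast\to A_2^\ast$ be a morphism of cohomologically connected DGAs over $\mathbb{K}$ inducing isomorphisms on $0$-th and first cohomology and an injection on second cohomology. Let $V=\bigoplus_i V_i$ be a finite-dimensional graded $\mathbb{K}$-vector space, $W_k(V)=\bigoplus_{i\le k}V_i$, and for $i\ge 0$ let $U_i\subset\mathrm{End}(V)$ be the endomorphisms mapping each $V_j$ into $V_{j-i}$ (so $U_iU_j\subset U_{i+j}$). Let $\omega=\sum_{i\ge1}\omega_i$, $\omega_i\in A_2^1\otimes U_i$, satisfy $d\omega+\omega\wedge\omega=0$, i.e. $d\omega_k=-\sum_{i+j=k,\,i,j\ge1}\omega_i\wedge\omega_j$ for all $k$. Put $a_0=\mathrm{Id}_V$. Then there exist $\Omega_i\in A_1^1\otimes U_i$ and $a_i\in A_2^0\otimes U_i$ for all $i\ge1$ such that for every $k\ge1$ \[d\Omega_k=-\sum_{i+j=k,\,i,j\ge1}\Omega_i\wedge\Omega_j,\qquad da_k=-\sum_{i+j=k,\,i\ge1,\,j\ge0}\omega_ia_j+\sum_{i+j=k,\,i\ge0,\,j\ge1}a_i\phi(\Omega_j).\]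
   Context: Products $\omega_i\wedge\omega_j$, $\omega_ia_j$, etc. combine the product of the DGA with composition in $\mathrm{End}(V)$; $\phi$ is applied to the form part. A DGA is cohomologically connected if $H^0\cong\mathbb{K}$. *)

From HB Require Import structures.
From mathcomp Require Import all_boot all_order all_algebra.
From mathcomp Require Import reals complex.
Set Implicit Arguments. Unset Strict Implicit. Unset Printing Implicit Defensive.
Import Order.TTheory GRing.Theory Num.Theory.
Local Open Scope ring_scope.

Definition Kof (R : realType) (b : bool) : fieldType :=
  if b then (R[i] : fieldType) else (R : fieldType).

(* A (non-negatively graded, associative, unital) DGA over K, presented as a
   K-algebra A together with its homogeneous components  deg p = A^p  and a
   K-linear differential d. *)
Record is_DGA (K : fieldType) (A : algType K) (deg : nat -> {pred A})
    (d : {linear A -> A}) : Prop := {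
  dga_sub0 : forall p, 0 \in deg p;
  dga_subZD : forall p (a : K) x y, x \in deg p -> y \in deg p ->
      a *: x + y \in deg p;
  dga_span : forall x : A, exists (N : nat) (f : nat -> A),
      (forall p, f p \in deg p) /\ x = \sum_(p < N) f p;
  dga_direct : forall (N : nat) (f : nat -> A),
      (forall p, f p \in deg p) -> \sum_(p < N) f p = 0 ->
      forall p, (p < N)%N -> f p = 0;
  dga_one : 1 \in deg 0;
  dga_mul : forall p q x y, x \in deg p -> y \in deg q -> x * y \in deg (p + q);
  dga_d_deg : forall p x, x \in deg p -> d x \in deg p.+1;
  dga_dd : forall x, d (d x) = 0;
  dga_leibniz : forall p x y, x \in deg p ->
      d (x * y) = d x * y + (-1) ^+ p * (x * d y)
}.

Definition exact_in (K : fieldType) (A : algType K) (deg : nat -> {pred A})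
    (d : {linear A -> A}) (p : nat) (x : A) : Prop :=
  match p with
  | 0 => x = 0
  | p'.+1 => exists y, y \in deg p' /\ x = d y
  end.

(* Cohomologically connected: H^0(A) = Z^0(A) is isomorphic to K, i.e.
   (since 1 is a 0-cocycle) 1 <> 0 and every 0-cocycle is a multiple of 1. *)
Definition cohom_connected (K : fieldType) (A : algType K)
    (deg : nat -> {pred A}) (d : {linear A -> A}) : Prop :=
  (1 : A) != 0 /\
  forall x, x \in deg 0 -> d x = 0 -> exists c : K, x = c *: 1.

Definition is_DGA_morphism (K : fieldType) (A1 A2 : algType K)
    (deg1 : nat -> {pred A1}) (d1 : {linear A1 -> A1})
    (deg2 : nat -> {pred A2}) (d2 : {linear A2 -> A2})
    (phi : {lrmorphism A1 -> A2}) : Prop :=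
  (forall p x, x \in deg1 p -> phi x \in deg2 p) /\
  (forall x, phi (d1 x) = d2 (phi x)).

Definition H_injective (K : fieldType) (A1 A2 : algType K)
    (deg1 : nat -> {pred A1}) (d1 : {linear A1 -> A1})
    (deg2 : nat -> {pred A2}) (d2 : {linear A2 -> A2})
    (phi : {lrmorphism A1 -> A2}) (p : nat) : Prop :=
  forall x, x \in deg1 p -> d1 x = 0 ->
    exact_in deg2 d2 p (phi x) -> exact_in deg1 d1 p x.

Definition H_surjective (K : fieldType) (A1 A2 : algType K)
    (deg1 : nat -> {pred A1}) (d1 : {linear A1 -> A1})
    (deg2 : nat -> {pred A2}) (d2 : {linear A2 -> A2})
    (phi : {lrmorphism A1 -> A2}) (p : nat) : Prop :=
  forall z, z \in deg2 p -> d2 z = 0 ->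
    exists x, [/\ x \in deg1 p, d1 x = 0 & exact_in deg2 d2 p (z - phi x)].

(* The graded vector space V = (+)_i V_i is represented by a homogeneous
   basis e_0, ..., e_{n-1}, with e_r of weight w r; End(V) is 'M_n acting
   on columns (column c holds the coordinates of the image of e_c).
   A^p (x) U_i is the space of n x n matrices with entries in A^p which
   map V_j into V_{j-i}: entry (r,c) may be nonzero only if w c = w r + i. *)
Definition in_AU (K : fieldType) (A : algType K) (deg : nat -> {pred A})
    (n : nat) (w : 'I_n -> int) (p i : nat) (X : 'M[A]_n) : Prop :=
  forall r c, X r c \in deg p /\ (X r c != 0 -> w c = w r + i%:Z).

(* Induction on k, with Omega_0 = omega_0 = 0 and a_0 = 1.  Set Omega_k = a_k = 0 and put
   Theta_k = sum_{i+j=k} Omega_i Omega_j  and  S_k = sum_{i+j=k} a_i phi(Omega_j) - omega_i a_j.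
   The Leibniz rule, associativity of these convolutions, the Maurer-Cartan equation for omega
   and the induction hypothesis give d Theta_k = 0 and d S_k = phi(Theta_k).  So the class of
   Theta_k dies in H^2(A_2), and injectivity on H^2 gives Theta_k = dX.  Then S_k - phi(X) is a
   1-cocycle of A_2, which surjectivity on H^1 writes as phi(Y) + dZ with Y a 1-cocycle of A_1;
   Omega_k = -(X + Y) and a_k = Z solve both equations in degree k.  All choices are made
   entrywise in End(V), which preserves the weights; only surjectivity on H^1 and injectivity
   on H^2 are used. *)

From mathcomp Require Import all_boot all_order all_algebra.
From mathcomp Require Import reals.
From Stdlib Require Import ClassicalEpsilon.
Import GRing.Theory.
Set Implicit Arguments. Unset Strict Implicit. Unset Printing Implicit Defensive.
Local Open Scope ring_scope.

Section Convolution.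
Variable R : pzRingType.
Implicit Types f g h : nat -> R.

Definition conv f g k : R := \sum_(i < k.+1) f i * g (k - i)%N.

Lemma convEr f g k : conv f g k = \sum_(i < k.+1) f (k - i)%N * g i.
Proof.
rewrite /conv (reindex_inj rev_ord_inj) /=.
by apply: eq_bigr => j _; rewrite (sub_ordK j).
Qed.

Lemma convA f g h k : conv (conv f g) h k = conv f (conv g h) k.
Proof.
symmetry; rewrite [RHS]convEr {1}/conv.
pose t j l := f j * (g (k - j - l)%N * h l).
transitivity (\sum_(j < k.+1) \sum_(l < k.+1 | (l <= k - j)%N) t j l).
  apply: eq_bigr => /= j _; rewrite convEr mulr_sumr.
  by rewrite (big_ord_narrow_leq (leq_subr _ _)).
rewrite (exchange_big_dep predT) //=; apply: eq_bigr => l _.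
transitivity (\sum_(j < k.+1 | (j <= k - l)%N) t j l).
  apply: eq_bigl => j; rewrite -ltnS -(ltnS j) -!subSn ?leq_ord //.
  by rewrite -subn_gt0 -(subn_gt0 j) -!subnDA addnC.
rewrite (big_ord_narrow_leq (leq_subr _ _)) /conv mulr_suml /=.
by apply: eq_bigr => j _; rewrite /t -!subnDA addnC mulrA.
Qed.

Lemma eq_conv f f' g g' k :
    (forall i, (i <= k)%N -> f i = f' i) -> (forall i, (i <= k)%N -> g i = g' i) ->
  conv f g k = conv f' g' k.
Proof. by move=> ef eg; apply: eq_bigr => i _; rewrite ef ?eg ?leq_subr // -ltnS. Qed.

Lemma conv_topl f f' g k : (forall i, (i < k)%N -> f i = f' i) ->
  conv f g k = conv f' g k + (f k - f' k) * g 0%N.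
Proof.
move=> ef; rewrite /conv !big_ord_recr /= subnn mulrBl -addrA [f' k * _ + _]addrC subrK.
by congr (_ + _); apply: eq_bigr => i _; rewrite ef.
Qed.

Lemma conv_topr f g g' k : (forall i, (i < k)%N -> g i = g' i) ->
  conv f g k = conv f g' k + f 0%N * (g k - g' k).
Proof.
move=> eg; rewrite /conv !big_ord_recl subn0 mulrBr addrAC [f 0%N * g' k + _]addrC subrK.
congr (_ + _); apply: eq_bigr => i _; rewrite eg //=.
by case: k i {eg} => [[] //|k] i; rewrite /bump /= add1n subSS ltnS leq_subr.
Qed.

Lemma conv_oppl f g k : conv (fun j => - f j) g k = - conv f g k.
Proof. by rewrite /conv -sumrN; apply: eq_bigr => i _; rewrite mulNr. Qed.

Lemma conv_oppr f g k : conv f (fun j => - g j) k = - conv f g k.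
Proof. by rewrite /conv -sumrN; apply: eq_bigr => i _; rewrite mulrN. Qed.

Lemma conv_addl f f' g k : conv (fun j => f j + f' j) g k = conv f g k + conv f' g k.
Proof. by rewrite /conv -big_split; apply: eq_bigr => i _; rewrite mulrDl. Qed.

Lemma conv_addr f g g' k : conv f (fun j => g j + g' j) k = conv f g k + conv f g' k.
Proof. by rewrite /conv -big_split; apply: eq_bigr => i _; rewrite mulrDr. Qed.

Lemma conv_derivation (D : {additive R -> R}) (s : R) f g k :
    (forall i y, (i <= k)%N -> D (f i * y) = D (f i) * y + s * (f i * D y)) ->
  D (conv f g k) = conv (fun j => D (f j)) g k + s * conv f (fun j => D (g j)) k.
Proof.
move=> Dfy; rewrite /conv raddf_sum mulr_sumr -big_split /=.
by apply: eq_bigr => i _; rewrite Dfy // -ltnS.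
Qed.

Lemma conv_transport_cancel W b F k :
  let G j := conv b F j - conv W b j in
  conv G F k - conv b (conv F F) k + (conv W G k + conv (conv W W) b k) = 0.
Proof.
rewrite /= conv_addr conv_addl conv_oppl conv_oppr !convA.
by rewrite subrK addrAC subrK subrr.
Qed.

Lemma conv_dropl f g k : f 0%N = 0 -> conv f g k = \sum_(1 <= i < k.+1) f i * g (k - i)%N.
Proof. by move=> f0; rewrite /conv big_ord_recl f0 mul0r add0r big_add1 /= big_mkord. Qed.

Lemma conv_dropr f g k : g 0%N = 0 -> conv f g k = \sum_(0 <= i < k) f i * g (k - i)%N.
Proof. by move=> g0; rewrite /conv big_ord_recr /= subnn g0 mulr0 addr0 big_mkord. Qed.

Lemma conv_inner f g k : f 0%N = 0 -> g 0%N = 0 ->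
  conv f g k = \sum_(1 <= i < k) f i * g (k - i)%N.
Proof.
move=> f0 g0; rewrite conv_dropl //; case: k => [|k]; first by rewrite !big_geq.
by rewrite big_nat_recr //= subnn g0 mulr0 addr0.
Qed.

Lemma eq_conv_lt f f' g g' k : f 0%N = 0 -> g' 0%N = 0 ->
    (forall i, (i < k)%N -> f i = f' i) -> (forall i, (i < k)%N -> g i = g' i) ->
  conv f g k = conv f' g' k.
Proof.
move=> f0 g'0 ef eg; rewrite (conv_topr _ eg) f0 mul0r addr0.
by rewrite (conv_topl _ ef) g'0 mulr0 addr0.
Qed.

End Convolution.

Lemma conv_morph (R S : pzRingType) (h : {additive R -> S}) (f g : nat -> R) k :
  {morph h : x y / x * y} -> h (conv f g k) = conv (fun j => h (f j)) (fun j => h (g j)) k.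
Proof. by move=> hM; rewrite /conv raddf_sum; apply: eq_bigr => i _; rewrite hM. Qed.

Lemma mx_choice (T : Type) m n (P : 'I_m -> 'I_n -> T -> Prop) :
  (forall r c, exists y, P r c y) -> exists M : 'M[T]_(m, n), forall r c, P r c (M r c).
Proof.
move=> exP; have /fin_all_exists [F PF] : forall rc : 'I_m * 'I_n, exists y, P rc.1 rc.2 y.
  by case=> r c; exact: exP.
by exists (\matrix_(r, c) F (r, c)) => r c; rewrite mxE; exact: (PF (r, c)).
Qed.

Section GradedMatrices.
Variables (K : fieldType) (A : algType K) (deg : nat -> {pred A}) (d : {linear A -> A}).
Hypothesis dgaA : is_DGA deg d.
Variables (n : nat) (w : 'I_n -> int).
Local Notation in_AU := (in_AU deg w).

Lemma deg_add p x y : x \in deg p -> y \in deg p -> x + y \in deg p.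
Proof. by move=> xp yp; have := dga_subZD dgaA 1 xp yp; rewrite scale1r. Qed.

Lemma deg_opp p x : x \in deg p -> - x \in deg p.
Proof.
by move=> xp; have := dga_subZD dgaA (-1) xp (dga_sub0 dgaA p); rewrite scaleN1r addr0.
Qed.

Lemma deg_sum p (I : finType) (F : I -> A) : (forall i, F i \in deg p) -> \sum_i F i \in deg p.
Proof. by move=> Fp; elim/big_ind: _ => //; [exact: (dga_sub0 dgaA) | exact: deg_add]. Qed.

Lemma map_mx_d_one : map_mx d (1 : 'M[A]_n) = 0.
Proof.
have d1 : d 1 = 0.
  have := dga_leibniz dgaA 1 (dga_one dgaA); rewrite !mul1r mulr1 => d1D.
  by apply: (addrI (d 1)); rewrite addr0 -d1D.
apply/matrixP => r c; rewrite -idmxE !mxE.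
by case: eqVneq => _; rewrite ?mulr1n ?mulr0n ?d1 ?raddf0.
Qed.

Lemma in_AU0 p i : in_AU p i 0.
Proof. by move=> r c; rewrite mxE eqxx (dga_sub0 dgaA). Qed.

Lemma in_AU1 : in_AU 0 0 1.
Proof.
move=> r c; rewrite -idmxE mxE addr0.
by case: eqVneq => [->|_]; rewrite ?mulr1n ?mulr0n ?eqxx ?(dga_one dgaA) ?(dga_sub0 dgaA).
Qed.

Lemma in_AUD p i X Y : in_AU p i X -> in_AU p i Y -> in_AU p i (X + Y).
Proof.
move=> XpI YpI r c; have [Xp Xi] := XpI r c; have [Yp Yi] := YpI r c.
rewrite mxE deg_add //; split=> // XY0; have [X0|/Xi //] := eqVneq (X r c) 0.
by apply: Yi; rewrite X0 add0r in XY0.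
Qed.

Lemma in_AUN p i X : in_AU p i X -> in_AU p i (- X).
Proof. by move=> XpI r c; have [Xp Xi] := XpI r c; rewrite mxE deg_opp // oppr_eq0. Qed.

Lemma in_AU_sum p i m (F : 'I_m -> 'M[A]_n) :
  (forall j, in_AU p i (F j)) -> in_AU p i (\sum_j F j).
Proof. by move=> FpI; elim/big_ind: _ => //; [exact: in_AU0 | exact: in_AUD]. Qed.

Lemma in_AUM p q i j X Y :
  in_AU p i X -> in_AU q j Y -> in_AU (p + q) (i + j) (X * Y).
Proof.
move=> XpI YqJ r c; rewrite -mulmxE mxE; split.
  by apply: deg_sum => l; exact: (dga_mul dgaA (XpI r l).1 (YqJ l c).1).
move=> XY0; have /existsP [l XYl0] : [exists l, X r l * Y l c != 0].
  apply: contraNT XY0 => /existsPn XY0; rewrite big1 // => l _.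
  by apply/eqP; rewrite -[_ == 0]negbK XY0.
have Xl0 : X r l != 0 by apply: contraNneq XYl0 => ->; rewrite mul0r.
have Yl0 : Y l c != 0 by apply: contraNneq XYl0 => ->; rewrite mulr0.
by rewrite (YqJ l c).2 // (XpI r l).2 // PoszD addrA.
Qed.

Lemma in_AU_conv p q f g k :
    (forall i, (i <= k)%N -> in_AU p i (f i)) -> (forall i, (i <= k)%N -> in_AU q i (g i)) ->
  in_AU (p + q) k (conv f g k).
Proof.
move=> fpI gqI; apply: in_AU_sum => i; rewrite -[k in in_AU _ k](subnKC (leq_ord i)).
by apply: in_AUM; [apply: fpI; rewrite -ltnS | apply: gqI; rewrite leq_subr].
Qed.

Lemma map_mx_leibniz p (X Y : 'M[A]_n) : (forall r c, X r c \in deg p) ->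
  map_mx d (X * Y) = map_mx d X * Y + (-1) ^+ p * (X * map_mx d Y).
Proof.
move=> Xp; apply/matrixP => r c.
have dXY l : d (X r l * Y l c) = d (X r l) * Y l c + (-1) ^+ odd p * (X r l * d (Y l c)).
  by rewrite signr_odd (dga_leibniz dgaA _ (Xp r l)).
rewrite -signr_odd; case: (odd p) dXY => dXY.
  rewrite expr1 mulN1r -!mulmxE !mxE raddf_sum -sumrN -big_split /=.
  by apply: eq_bigr => l _; rewrite dXY !mxE expr1 mulN1r.
rewrite expr0 mul1r -!mulmxE !mxE raddf_sum -big_split /=.
by apply: eq_bigr => l _; rewrite dXY !mxE expr0 mul1r.
Qed.
End GradedMatrices.

Section Lifting.
Variables (K : fieldType) (A1 A2 : algType K).
Variables (deg1 : nat -> {pred A1}) (d1 : {linear A1 -> A1}).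
Variables (deg2 : nat -> {pred A2}) (d2 : {linear A2 -> A2}).
Variable phi : {lrmorphism A1 -> A2}.
Hypotheses (dga1 : is_DGA deg1 d1) (dga2 : is_DGA deg2 d2).
Variables (n : nat) (w : 'I_n -> int).

Lemma mx_lift_exact p k (T : 'M[A1]_n) (S : 'M[A2]_n) :
    H_injective deg1 d1 deg2 d2 phi p.+1 ->
    in_AU deg1 w p.+1 k T -> map_mx d1 T = 0 ->
    (forall r c, S r c \in deg2 p) -> map_mx d2 S = map_mx phi T ->
  exists X, in_AU deg1 w p k X /\ map_mx d1 X = T.
Proof.
move=> injH TpK /matrixP dT0 Sp /matrixP dS.
(* A zero entry is lifted to 0, which keeps the weight condition. *)
have /mx_choice [X XP] : forall r c, exists x,
    [/\ x \in deg1 p, x != 0 -> w c = w r + k%:Z & T r c = d1 x].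
  move=> r c; have [T0|Tn0] := eqVneq (T r c) 0.
    by exists 0; rewrite T0 raddf0 eqxx (dga_sub0 dga1).
  have [Tp Tk] := TpK r c.
  have dTrc : d1 (T r c) = 0 by have := dT0 r c; rewrite !mxE.
  have [|x [xp ->]] := injH _ Tp dTrc.
    by exists (S r c); split=> //; have := dS r c; rewrite !mxE.
  by exists x; split=> // _; exact: Tk.
exists X; split; first by move=> r c; have [] := XP r c.
by apply/matrixP => r c; rewrite mxE; have [_ _ ->] := XP r c.
Qed.

Lemma mx_lift_closed p k (Z : 'M[A2]_n) :
    H_surjective deg1 d1 deg2 d2 phi p.+1 ->
    in_AU deg2 w p.+1 k Z -> map_mx d2 Z = 0 ->
  exists X Y, [/\ in_AU deg1 w p.+1 k X, map_mx d1 X = 0, in_AU deg2 w p k Y &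
    Z - map_mx phi X = map_mx d2 Y].
Proof.
move=> surjH ZpK /matrixP dZ0.
have /mx_choice [XY XYP] : forall r c, exists xy : A1 * A2,
    [/\ xy.1 \in deg1 p.+1, d1 xy.1 = 0, xy.2 \in deg2 p,
      Z r c - phi xy.1 = d2 xy.2 & (xy.1 != 0) || (xy.2 != 0) -> w c = w r + k%:Z].
  move=> r c; have [Z0|Zn0] := eqVneq (Z r c) 0.
    exists (0, 0); rewrite /= Z0 !raddf0 addr0 eqxx.
    by split=> //; [exact: (dga_sub0 dga1) | exact: (dga_sub0 dga2) | rewrite eqxx].
  have [Zp Zk] := ZpK r c.
  have dZrc : d2 (Z r c) = 0 by have := dZ0 r c; rewrite !mxE.
  have [x [xp dx0 [y [yp Ze]]]] := surjH _ Zp dZrc.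
  by exists (x, y); split=> // _; exact: Zk.
exists (map_mx fst XY), (map_mx snd XY); split.
- by move=> r c; rewrite mxE; have [xp _ _ _ k_] := XYP r c; split=> // x0; apply: k_; rewrite x0.
- by apply/matrixP => r c; rewrite !mxE; have [] := XYP r c.
- move=> r c; rewrite mxE; have [_ _ yp _ k_] := XYP r c; split=> // y0; apply: k_.
  by rewrite y0 orbT.
- by apply/matrixP => r c; rewrite !mxE; have [] := XYP r c.
Qed.
End Lifting.

Section SequenceChoice.
Variables (T : Type) (x0 : T) (P : nat -> (nat -> T) -> Prop).
Hypothesis P_prefix : forall k f g, (forall j, (j <= k)%N -> f j = g j) -> P k f -> P k g.
Hypothesis P_extend : forall k f, (forall j, (j < k)%N -> P j f) ->
  exists x, P k [eta f with k |-> x].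

Fixpoint prefix m : nat -> T :=
  if m is m'.+1 then
    let f := prefix m' in
    [eta f with m' |-> epsilon (inhabits x0) (fun x => P m' [eta f with m' |-> x])]
  else fun=> x0.

Lemma prefix_stable m j : (j < m)%N -> prefix m j = prefix j.+1 j.
Proof.
elim: m => // m IHm; rewrite ltnS leq_eqVlt => /predU1P [-> //| jm] /=.
by rewrite (ltn_eqF jm) IHm.
Qed.

Lemma prefix_spec m j : (j < m)%N -> P j (prefix m).
Proof.
elim: m j => // m IHm j; rewrite ltnS leq_eqVlt => /predU1P [->| jm].
  apply: (epsilon_spec _ (fun x => P m [eta prefix m with m |-> x])).
  by apply: P_extend => i; exact: IHm.
apply: P_prefix (IHm j jm) => i ij /=.
by rewrite (ltn_eqF (leq_ltn_trans ij jm)).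
Qed.

Lemma sequence_choice : exists f, forall k, P k f.
Proof.
exists (fun j => prefix j.+1 j) => k.
by apply: P_prefix (prefix_spec (ltnSn k)) => j jk; rewrite prefix_stable.
Qed.

End SequenceChoice.

Section Construction.
Variables (K : fieldType) (A1 A2 : algType K).
Variables (deg1 : nat -> {pred A1}) (d1 : {linear A1 -> A1}).
Variables (deg2 : nat -> {pred A2}) (d2 : {linear A2 -> A2}).
Variable phi : {lrmorphism A1 -> A2}.
Variables (n : nat) (w : 'I_n -> int) (omega : nat -> 'M[A2]_n).
Hypotheses (dga1 : is_DGA deg1 d1) (dga2 : is_DGA deg2 d2).
Hypothesis phi_dga : is_DGA_morphism deg1 d1 deg2 d2 phi.
Hypothesis phi_inj2 : H_injective deg1 d1 deg2 d2 phi 2.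
Hypothesis phi_surj1 : H_surjective deg1 d1 deg2 d2 phi 1.
Hypothesis omega_in_AU : forall i, (1 <= i)%N -> in_AU deg2 w 1 i (omega i).
Hypothesis omega_flat : forall k, (1 <= k)%N ->
  map_mx d2 (omega k) = - \sum_(1 <= i < k) omega i *m omega (k - i)%N.

Definition om j := if j is 0 then 0 else omega j.

(* Indices start at 0, with Omega_0 = om 0 = 0 and a_0 = 1, so that both recursions of the
   theorem become convolution identities. *)
Definition solves_at k (O : nat -> 'M[A1]_n) (b : nat -> 'M[A2]_n) :=
  [/\ in_AU deg1 w 1 k (O k), in_AU deg2 w 0 k (b k),
      map_mx d1 (O k) = - conv O O k &
      map_mx d2 (b k) = conv b (fun j => map_mx phi (O j)) k - conv om b k].

Lemma om_in_AU j : in_AU deg2 w 1 j (om j).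
Proof. by case: j => [|j]; [exact: (in_AU0 dga2) | exact: omega_in_AU]. Qed.

Lemma om_flat j : map_mx d2 (om j) = - conv om om j.
Proof.
have om_pos m : (0 < m)%N -> om m = omega m by case: m.
rewrite conv_inner //; case: j => [|j]; first by rewrite big_geq // oppr0 raddf0.
rewrite omega_flat // mulmxE; congr (- _); apply: eq_big_nat => i /andP [i_gt0 ij].
by rewrite !om_pos ?subn_gt0.
Qed.

Lemma map_mx_phi_in_AU p i X : in_AU deg1 w p i X -> in_AU deg2 w p i (map_mx phi X).
Proof.
move=> XpI r c; have [Xp Xi] := XpI r c; rewrite mxE phi_dga.1 //.
by split=> // phiX0; apply: Xi; apply: contraNneq phiX0 => ->; rewrite rmorph0.
Qed.

Lemma map_mx_phi_d (X : 'M[A1]_n) : map_mx phi (map_mx d1 X) = map_mx d2 (map_mx phi X).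
Proof. by apply/matrixP => r c; rewrite !mxE phi_dga.2. Qed.

Lemma map_mx_phiM (X Y : 'M[A1]_n) : map_mx phi (X * Y) = map_mx phi X * map_mx phi Y.
Proof. by rewrite -!mulmxE map_mxM. Qed.

Lemma eq_solves_at k O O' b b' :
    (forall j, (j <= k)%N -> O j = O' j) -> (forall j, (j <= k)%N -> b j = b' j) ->
  solves_at k O b -> solves_at k O' b'.
Proof.
move=> eO eb [OI bI dO db]; rewrite /solves_at -eO // -eb //; split=> //.
  by rewrite dO (eq_conv eO eO).
have eF j : (j <= k)%N -> map_mx phi (O j) = map_mx phi (O' j) by move/eO ->.
by rewrite db (eq_conv eb eF) (eq_conv (fun j _ => erefl (om j)) eb).
Qed.

Lemma solves_at0 O b : O 0%N = 0 -> b 0%N = 1 -> solves_at 0 O b.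
Proof.
move=> O0 b0; split; rewrite ?O0 ?b0.
- exact: (in_AU0 dga1).
- exact: (in_AU1 dga2).
- by rewrite /conv big_ord1 O0 mulr0 oppr0 raddf0.
- by rewrite /conv !big_ord1 /= O0 b0 raddf0 mulr0 mul0r subr0 (map_mx_d_one dga2).
Qed.

Section Extension.
Variables (k : nat) (O : nat -> 'M[A1]_n) (b : nat -> 'M[A2]_n).
Hypothesis k_gt0 : (0 < k)%N.
Hypotheses (O0 : O 0%N = 0) (b0 : b 0%N = 1) (Ok : O k = 0) (bk : b k = 0).
Hypothesis solves_lt : forall j, (j < k)%N -> solves_at j O b.

Let F j := map_mx phi (O j).
Let G j := conv b F j - conv om b j.

Lemma O_in_AU j : (j <= k)%N -> in_AU deg1 w 1 j (O j).
Proof.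
rewrite leq_eqVlt => /predU1P [->|/solves_lt []//]; rewrite Ok; exact: (in_AU0 dga1).
Qed.

Lemma b_in_AU j : (j <= k)%N -> in_AU deg2 w 0 j (b j).
Proof.
rewrite leq_eqVlt => /predU1P [->|/solves_lt []//]; rewrite bk; exact: (in_AU0 dga2).
Qed.

Lemma F_flat j : (j < k)%N -> map_mx d2 (F j) = - conv F F j.
Proof.
move=> jk; have [_ _ dO _] := solves_lt jk.
by rewrite /F -map_mx_phi_d dO raddfN (conv_morph _ _ _ map_mx_phiM).
Qed.

Lemma curvature_closed : map_mx d1 (conv O O k) = 0.
Proof.
have dO j : (j < k)%N -> map_mx d1 (O j) = - conv O O j by case/solves_lt.
rewrite (conv_derivation (s := -1)); last first.
  by move=> i Y ik /=; rewrite (map_mx_leibniz dga1 _ (fun r c => (O_in_AU ik r c).1)) expr1.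
rewrite (conv_topl _ dO) (conv_topr _ dO) O0 mulr0 mul0r !addr0.
by rewrite conv_oppl conv_oppr convA mulN1r opprK addNr.
Qed.

Lemma d_transport : map_mx d2 (G k) = map_mx phi (conv O O k).
Proof.
have db j : (j < k)%N -> map_mx d2 (b j) = G j by case/solves_lt.
rewrite raddfB /= (conv_derivation (s := 1) (f := b)); last first.
  by move=> i Y ik /=; rewrite (map_mx_leibniz dga2 _ (fun r c => (b_in_AU ik r c).1)) expr0.
rewrite (conv_derivation (s := -1) (f := om)); last first.
  by move=> i Y _ /=; rewrite (map_mx_leibniz dga2 _ (fun r c => (om_in_AU i r c).1)) expr1.
rewrite /= (eq_conv (fun j _ => om_flat j) (fun j _ => erefl (b j))).
rewrite (conv_topl _ db) (conv_topr _ F_flat) (conv_topr _ db).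
have F0 : F 0%N = 0 by rewrite /F O0 raddf0.
have dFk : map_mx d2 (F k) = 0 by rewrite /F Ok !raddf0.
rewrite -(conv_morph _ _ _ map_mx_phiM) -/F F0 dFk b0 /= mulr0 mul0r !addr0 !mul1r.
rewrite sub0r opprK conv_oppl conv_oppr mulN1r opprB opprK.
rewrite (addrA (conv G F k)) (addrAC (conv G F k - _)).
by rewrite /G conv_transport_cancel add0r.
Qed.

Lemma solves_at_extend : exists X Y, solves_at k [eta O with k |-> X] [eta b with k |-> Y].
Proof.
have F_in j : (j <= k)%N -> in_AU deg2 w 1 j (F j).
  by move=> jk; apply: map_mx_phi_in_AU; exact: O_in_AU.
have curv_in : in_AU deg1 w 2 k (conv O O k).
  exact: (in_AU_conv dga1 (p := 1) (q := 1) O_in_AU O_in_AU).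
have G_in : in_AU deg2 w 1 k (G k).
  apply: (in_AUD dga2); first exact: (in_AU_conv dga2 (p := 0) (q := 1) b_in_AU F_in).
  apply: (in_AUN dga2).
  exact: (in_AU_conv dga2 (p := 1) (q := 0) (fun j _ => om_in_AU j) b_in_AU).
have [X [XI dX]] :=
  mx_lift_exact dga1 phi_inj2 curv_in curvature_closed (fun r c => (G_in r c).1) d_transport.
have cocI : in_AU deg2 w 1 k (G k - map_mx phi X).
  by apply: (in_AUD dga2) => //; apply: (in_AUN dga2); exact: map_mx_phi_in_AU.
have dcoc : map_mx d2 (G k - map_mx phi X) = 0.
  by rewrite raddfB /= d_transport -map_mx_phi_d dX subrr.
have [Y [Z [YI dY ZI eZ]]] := mx_lift_closed dga1 dga2 phi_surj1 cocI dcoc.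
exists (- (X + Y)), Z.
have O'0 : [eta O with k |-> - (X + Y)] 0%N = 0 by rewrite /= eq_sym (gtn_eqF k_gt0).
have O'_lt j : (j < k)%N -> O j = [eta O with k |-> - (X + Y)] j by move=> jk; rewrite /= ltn_eqF.
have b'_lt j : (j < k)%N -> [eta b with k |-> Z] j = b j by move=> jk; rewrite /= ltn_eqF.
split; rewrite /= eqxx //.
- by apply: (in_AUN dga1); exact: (in_AUD dga1).
- by rewrite raddfN raddfD /= dX dY addr0 (eq_conv_lt O0 O'0 O'_lt O'_lt).
rewrite (conv_topr _ b'_lt) (conv_topl _ b'_lt) /= eqxx eq_sym (gtn_eqF k_gt0) O0.
have F'_lt j : (j < k)%N -> map_mx phi ([eta O with k |-> - (X + Y)] j) = F j.
  by move=> jk; rewrite /= ltn_eqF.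
rewrite (conv_topr _ F'_lt) /= eqxx b0 /F Ok !raddf0 mul0r mulr0 !addr0 mul1r -/F.
by rewrite -eZ /G raddfN raddfD [RHS]addrAC opprD addrA.
Qed.

End Extension.

Lemma solutions_exist : exists (O : nat -> 'M[A1]_n) (b : nat -> 'M[A2]_n),
  [/\ O 0%N = 0, b 0%N = 1 & forall k, solves_at k O b].
Proof.
pose P k (s : nat -> 'M[A1]_n * 'M[A2]_n) :=
  [/\ (s 0%N).1 = 0, (s 0%N).2 = 1 & solves_at k (fun j => (s j).1) (fun j => (s j).2)].
have P_prefix k s s' : (forall j, (j <= k)%N -> s j = s' j) -> P k s -> P k s'.
  move=> es [O0 b0 solk]; rewrite /P -es //; split=> //.
  by apply: eq_solves_at solk => j /es ->.
have P_extend k s : (forall j, (j < k)%N -> P j s) -> exists x, P k [eta s with k |-> x].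
  move=> P_lt; have [->|k_gt0] := posnP k.
    by exists (0, 1); split=> //=; exact: solves_at0.
  have [O0 b0 _] := P_lt 0%N k_gt0.
  pose O := [eta (fun j => (s j).1) with k |-> 0].
  pose b := [eta (fun j => (s j).2) with k |-> 0].
  have k_neq0 : (0 == k) = false by rewrite eq_sym gtn_eqF.
  have [|||||X [Y solk]] := @solves_at_extend k O b k_gt0; rewrite /O /b /= ?k_neq0 ?eqxx //.
    move=> j jk; have [_ _ solj] := P_lt j jk; apply: eq_solves_at solj => i ij /=;
    by rewrite ltn_eqF // (leq_ltn_trans ij jk).
  exists (X, Y); split; rewrite /= ?k_neq0 //.
  by apply: eq_solves_at solk => j _ /=; case: eqP.
have [s sol] := sequence_choice (0, 0) P_prefix P_extend.
exists (fun j => (s j).1), (fun j => (s j).2); have [O0 b0 _] := sol 0%N.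
by split=> // k; have [] := sol k.
Qed.

End Construction.


Theorem lemma10p3 (R : realType) (isC : bool)
    (A1 A2 : algType (Kof R isC))
    (deg1 : nat -> {pred A1}) (d1 : {linear A1 -> A1})
    (deg2 : nat -> {pred A2}) (d2 : {linear A2 -> A2})
    (phi : {lrmorphism A1 -> A2})
    (n : nat) (w : 'I_n -> int) (omega : nat -> 'M[A2]_n) :
  is_DGA deg1 d1 -> is_DGA deg2 d2 ->
  cohom_connected deg1 d1 -> cohom_connected deg2 d2 ->
  is_DGA_morphism deg1 d1 deg2 d2 phi ->
  H_injective deg1 d1 deg2 d2 phi 0 -> H_surjective deg1 d1 deg2 d2 phi 0 ->
  H_injective deg1 d1 deg2 d2 phi 1 -> H_surjective deg1 d1 deg2 d2 phi 1 ->
  H_injective deg1 d1 deg2 d2 phi 2 ->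
  (forall i, (1 <= i)%N -> in_AU deg2 w 1 i (omega i)) ->
  (forall k, (1 <= k)%N ->
     map_mx d2 (omega k) = - \sum_(1 <= i < k) omega i *m omega (k - i)%N) ->
  exists (Omega : nat -> 'M[A1]_n) (a : nat -> 'M[A2]_n),
    (forall i, (1 <= i)%N -> in_AU deg1 w 1 i (Omega i)) /\
    (forall i, (1 <= i)%N -> in_AU deg2 w 0 i (a i)) /\
    (forall k, (1 <= k)%N ->
       map_mx d1 (Omega k) = - \sum_(1 <= i < k) Omega i *m Omega (k - i)%N /\
       map_mx d2 (a k) =
         - \sum_(1 <= i < k.+1)
              omega i *m (if (k - i == 0)%N then 1%:M else a (k - i)%N)
         + \sum_(0 <= i < k)
              (if (i == 0)%N then 1%:M else a i) *m map_mx phi (Omega (k - i)%N)).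
Proof.
move=> dga1 dga2 _ _ phi_dga _ _ _ surj1 inj2 omega_in omega_flat.
have [O [a [O0 a0 sol]]] := solutions_exist dga1 dga2 phi_dga inj2 surj1 omega_in omega_flat.
have a_if j : (if j == 0%N then 1%:M else a j) = a j by case: j => //=; rewrite a0 idmxE.
exists O, a; split=> [i _|]; first by have [] := sol i.
split=> [i _|k _]; first by have [] := sol i.
have [_ _ dO da] := sol k; split; first by rewrite dO (conv_inner _ O0 O0) mulmxE.
have F0 : map_mx phi (O 0%N) = 0 by rewrite O0 raddf0.
rewrite da addrC (conv_dropl _ _ (erefl : om omega 0%N = 0)) (conv_dropr _ _ F0) !mulmxE.
congr (- _ + _); last by apply: eq_bigr => i _; rewrite a_if.
by apply: eq_big_nat => -[|i] // _; rewrite a_if.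
Qed.
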